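(* Let $V:\mathcal{M}^+(\mathbb{R}^d)\to\mathcal{M}^+(\mathbb{R}^d\times\mathbb{R}^d)$ satisfy $\pi_1^{\#}V[\mu]=\mu$ for all $\mu$, and suppose that for every $R>0$ there is a constant $C_F(R)$ such that $\mathcal{W}^g(V[\mu],V[\nu])\le C_F(R)\|\mu-\nu\|_{BL^*}$ whenever $\mu,\nu$ are supported in $B(0,R)$. Then: (V2) for every $R>0$ there is a constant $C$ such that $\|V[\mu]-V[\nu]\|_{BL^*}\le C\|\mu-\nu\|_{BL^*}$ whenever $\mu,\nu$ are supported in $B(0,R)$; and (V3) for every $R>0$ there is $C_H(R)$ such that whenever $\mu,\nu$ are supported in $B(0,R)$, for all $\tau>0$, $$\sup_{\|\psi\|_{BL(\mathbb{R}^d)}\le1}\int_{\mathbb{R}^d\times\mathbb{R}^d}\psi(x+\tau v)\,d(V[\mu]-V[\nu])(x,v)\le(1+C_H(R)\tau)\|\mu-\nu\|_{BL^*}.$$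
   Context: $\mathcal{M}^+(\mathbb{R}^k)$: finite nonnegative Borel measures; $\pi_1(x,v)=x$. $\|f\|_{BL}=\max(\sup|f|,\operatorname{Lip}f)$, $\|\mu\|_{BL^*}=\sup\{\int\psi\,d\mu:\|\psi\|_{BL}\le1\}$, $\|\cdot\|_{TV}$ total variation. For nonnegative measures $\alpha,\beta$ of equal finite mass on $\mathbb{R}^d$, $W_1(\alpha,\beta)=\inf\int|x-y|\,d\gamma$ over couplings $\gamma$ (nonnegative measures on $\mathbb{R}^{2d}$ with marginals $\alpha,\beta$); $\mathcal{P}^{opt}(\alpha,\beta)$ is the set of minimizing couplings. For $\tilde V_1,\tilde V_2\in\mathcal{M}^+(\mathbb{R}^d\times\mathbb{R}^d)$ of equal mass, $\mathcal{P}(\tilde V_1,\tilde V_2)$ is the set of nonnegative measures $p$ on $(\mathbb{R}^d)^4$ (variables $(x,v,y,w)$) with $\pi_{12}^{\#}p=\tilde V_1$, $\pi_{34}^{\#}p=\tilde V_2$. For $V_1,V_2\in\mathcal{M}^+(\mathbb{R}^d\times\mathbb{R}^d)$ with $\mu_i=\pi_1^{\#}V_i$, define $\mathcal{W}^g(V_1,V_2)=\inf\{\int|v-w|\,dp(x,v,y,w)\}$, the infimum over all $\tilde V_1\le V_1$, $\tilde V_2\le V_2$ (nonnegative submeasures), with $\tilde\mu_i=\pi_1^{\#}\tilde V_i$, and $p\in\mathcal{P}(\tilde V_1,\tilde V_2)$ such that $\|\mu_1-\mu_2\|_{BL^*}=\|\mu_1-\tilde\mu_1\|_{TV}+\|\mu_2-\tilde\mu_2\|_{TV}+W_1(\tilde\mu_1,\tilde\mu_2)$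 and $\pi_{13}^{\#}p\in\mathcal{P}^{opt}(\tilde\mu_1,\tilde\mu_2)$. *)

From HB Require Import structures.
From mathcomp Require Import all_boot all_order all_algebra.
From mathcomp Require Import all_classical all_reals all_analysis.
Set Implicit Arguments. Unset Strict Implicit. Unset Printing Implicit Defensive.
Import Order.TTheory GRing.Theory Num.Theory.
Import numFieldNormedType.Exports.
Local Open Scope classical_set_scope.
Local Open Scope ring_scope.

Notation Rd R d := (g_sigma_algebraType (@open 'rV[R]_d)).

Definition eucl_norm (R : realType) (d : nat) (x : 'rV[R]_d) : R :=
  Num.sqrt (\sum_(i < d) x ord0 i ^+ 2).
Definition eucl_dist (R : realType) (d : nat) (x y : 'rV[R]_d) : R :=
  eucl_norm (x - y).
Definition eucl_dist2 (R : realType) (d : nat) (p q : 'rV[R]_d * 'rV[R]_d) : R :=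
  Num.sqrt (eucl_norm (p.1 - q.1) ^+ 2 + eucl_norm (p.2 - q.2) ^+ 2).

Definition BL1 (X : Type) (R : realType) (dist : X -> X -> R) (f : X -> R) :=
  (forall x, `|f x| <= 1) /\ (forall x y, `|f x - f y| <= dist x y).

Definition transport (R : realType) (n : nat) (tau : R)
  (xv : (Rd R n * Rd R n)%type) : Rd R n :=
  (xv.1 : 'rV[R]_n) + tau *: (xv.2 : 'rV[R]_n).

Local Open Scope ereal_scope.

Definition ipm d (X : measurableType d) (R : realType) (F : set (X -> R))
  (m1 m2 : set X -> \bar R) : \bar R :=
  ereal_sup [set \int[m1]_x (f x)%:E - \int[m2]_x (f x)%:E | f in F].

Definition BLdual (R : realType) (n : nat) (mu nu : set (Rd R n) -> \bar R) :=
  ipm [set f : Rd R n -> R | BL1 (@eucl_dist R n) f] mu nu.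

Definition BLdual2 (R : realType) (n : nat)
  (V1 V2 : set (Rd R n * Rd R n) -> \bar R) :=
  ipm [set f : Rd R n * Rd R n -> R | BL1 (@eucl_dist2 R n) f] V1 V2.

(* ||pi_1# V1 - pi_1# V2||_{BL^*}: integrals against the pushforwards *)
Definition BLdual_fst (R : realType) (n : nat)
  (V1 V2 : set (Rd R n * Rd R n) -> \bar R) :=
  ipm [set (f \o fst) | f in [set f : Rd R n -> R | BL1 (@eucl_dist R n) f]] V1 V2.

Definition TVnorm d (X : measurableType d) (R : realType)
  (m1 m2 : set X -> \bar R) : \bar R :=
  ereal_sup [set s | exists (k : nat) (A : 'I_k -> set X),
      [/\ (forall i, measurable (A i)),
          (forall i j, i != j -> A i `&` A j = set0) &
          s = \sum_(i < k) `|m1 (A i) - m2 (A i)|]].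

Definition coupling (R : realType) (n : nat)
  (alpha beta : set (Rd R n) -> \bar R)
  (gamma : {measure set (Rd R n * Rd R n) -> \bar R}) :=
  forall A, measurable A ->
    gamma (A `*` setT) = alpha A /\ gamma (setT `*` A) = beta A.

Definition W1 (R : realType) (n : nat) (alpha beta : set (Rd R n) -> \bar R) :=
  ereal_inf [set \int[gamma]_xy (eucl_dist (xy.1 : 'rV[R]_n) xy.2)%:E |
     gamma in [set gamma | coupling alpha beta gamma]].

Definition Popt (R : realType) (n : nat) (alpha beta : set (Rd R n) -> \bar R)
  (gamma : {measure set (Rd R n * Rd R n) -> \bar R}) :=
  coupling alpha beta gamma /\
  \int[gamma]_xy (eucl_dist (xy.1 : 'rV[R]_n) xy.2)%:E = W1 alpha beta.

Definition proj1m (R : realType) (n : nat) (V : set (Rd R n * Rd R n) -> \bar R)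
  : set (Rd R n) -> \bar R := fun A => V (A `*` setT).

Definition submeasure d (X : measurableType d) (R : realType)
  (Vt : {measure set X -> \bar R}) (V : set X -> \bar R) :=
  forall A, measurable A -> Vt A <= V A.

Definition Wg (R : realType) (n : nat)
  (V1 V2 : set (Rd R n * Rd R n) -> \bar R) : \bar R :=
  ereal_inf [set x | exists (Vt1 Vt2 : {measure set (Rd R n * Rd R n) -> \bar R})
    (p : {measure set ((Rd R n * Rd R n) * (Rd R n * Rd R n)) -> \bar R}),
    [/\ submeasure Vt1 V1 /\ submeasure Vt2 V2,
        (forall A, measurable A -> p (A `*` setT) = Vt1 A /\ p (setT `*` A) = Vt2 A),
        BLdual_fst V1 V2 = TVnorm (proj1m V1) (proj1m Vt1)
                            + TVnorm (proj1m V2) (proj1m Vt2)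
                            + W1 (proj1m Vt1) (proj1m Vt2),
        (* pi_13# p in P^opt(mu1~, mu2~) *)
        (exists gamma : {measure set (Rd R n * Rd R n) -> \bar R},
           (forall A, measurable A ->
              gamma A = p [set z | A (z.1.1, z.2.1)]) /\
           Popt (proj1m Vt1) (proj1m Vt2) gamma) &
        x = \int[p]_z (eucl_dist (z.1.2 : 'rV[R]_n) z.2.2)%:E]].

Definition supported_in (R : realType) (n : nat) (mu : set (Rd R n) -> \bar R)
  (r : R) := mu [set x : Rd R n | (r < eucl_norm (x : 'rV[R]_n))%R] = 0.

(* Both estimates are instances of one bound on test functions Phi of (x, v)
   with |Phi| <= 1 and Phi (x, v) - Phi (y, w) <= |x - y| + c |v - w|:
     int Phi d(V[mu] - V[nu]) <= (1 + c C_F) ||mu - nu||_BL*.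
   A bounded-Lipschitz function of R^{2d} is such a Phi with c = 1, and
   psi (x + tau v) is one with c = tau.  For the bound, take an admissible
   triple (V1~, V2~, p) in the definition of W^g and split
     int Phi dV[mu] - int Phi dV[nu]
       = int Phi d(V[mu] - V1~) + int (Phi z1 - Phi z2) dp + int Phi d(V2~ - V[nu]).
   The outer terms are at most the mass defects, hence at most the two TV terms;
   the middle one is at most int |x - y| dp + c int |v - w| dp, and the first
   integral is W1 (mu1~, mu2~) because pi_13# p is optimal.  By the choice of the
   triple the sum is ||mu - nu||_BL* + c int |v - w| dp, and taking p nearly
   optimal for W^g gives the bound. *)

From HB Require Import structures.
From mathcomp Require Import all_boot all_order all_algebra.
From mathcomp Require Import all_classical all_reals all_analysis.
From mathcomp Require Import measurable_realfun ring lra.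
Import Order.TTheory GRing.Theory Num.Theory.
Import numFieldNormedType.Exports.
Local Open Scope classical_set_scope.
Local Open Scope ring_scope.

Section EuclideanNorm.
Context {R : realType} {n : nat}.
Implicit Types (x y : 'rV[R]_n) (c e : R).

Lemma eucl_norm_ge0 x : 0 <= eucl_norm x.
Proof. exact: sqrtr_ge0. Qed.

Lemma eucl_norm_sqr x : eucl_norm x ^+ 2 = \sum_(i < n) x ord0 i ^+ 2.
Proof. by rewrite sqr_sqrtr // sumr_ge0 // => i _; exact: sqr_ge0. Qed.

Lemma eucl_norm_eq0 x : eucl_norm x = 0 -> forall i, x ord0 i = 0.
Proof.
move=> x0 i; apply/eqP; rewrite -sqrf_eq0.
have /eqP : \sum_(j < n) x ord0 j ^+ 2 = 0 by rewrite -eucl_norm_sqr x0 expr0n.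
by rewrite psumr_eq0 => [/allP/(_ i (mem_index_enum _))|j _]; rewrite ?sqr_ge0.
Qed.

Lemma eucl_norm_CauchySchwarz x y :
  \sum_(i < n) x ord0 i * y ord0 i <= eucl_norm x * eucl_norm y.
Proof.
set s := eucl_norm x; set t := eucl_norm y; set S := \sum_(i < n) _.
have [st0|st0] := eqVneq (s * t) 0.
  have -> : S = 0.
    move/eqP: st0; rewrite mulf_eq0 => /orP[]/eqP/eucl_norm_eq0 z0;
    by rewrite /S big1 // => i _; rewrite z0 ?mul0r ?mulr0.
  by rewrite st0.
have stp : 0 < s * t by rewrite lt0r st0 mulr_ge0 ?eucl_norm_ge0.
have : 0 <= \sum_(i < n) (t * x ord0 i - s * y ord0 i) ^+ 2.
  by apply: sumr_ge0 => i _; exact: sqr_ge0.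
have -> : \sum_(i < n) (t * x ord0 i - s * y ord0 i) ^+ 2 =
    t ^+ 2 * \sum_(i < n) x ord0 i ^+ 2 + s ^+ 2 * \sum_(i < n) y ord0 i ^+ 2
    - 2 * (s * t) * S.
  rewrite /S !mulr_sumr -big_split -sumrB /=.
  by apply: eq_bigr => i _; ring.
rewrite -!eucl_norm_sqr -/s -/t; nra.
Qed.

Lemma eucl_normD x y : eucl_norm (x + y) <= eucl_norm x + eucl_norm y.
Proof.
rewrite -[leRHS]ger0_norm ?addr_ge0 ?eucl_norm_ge0 // -sqrtr_sqr ler_sqrt ?sqr_ge0 //.
have -> : \sum_(i < n) (x + y) ord0 i ^+ 2 = eucl_norm x ^+ 2 + eucl_norm y ^+ 2
    + 2 * \sum_(i < n) x ord0 i * y ord0 i.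
  rewrite !eucl_norm_sqr mulr_sumr -!big_split /=.
  by apply: eq_bigr => i _; rewrite !mxE; ring.
have := eucl_norm_CauchySchwarz x y; nra.
Qed.

Lemma eucl_normZ c x : eucl_norm (c *: x) = `|c| * eucl_norm x.
Proof.
rewrite /eucl_norm -sqrtr_sqr -sqrtrM ?sqr_ge0 // mulr_sumr.
by congr Num.sqrt; apply: eq_bigr => i _; rewrite !mxE; ring.
Qed.

Lemma eucl_norm_lt_coord x e : 0 < e ->
  (forall i, `|x ord0 i| <= e / n.+1%:R) -> eucl_norm x < e.
Proof.
move=> e0 xe; set a := e / n.+1%:R.
have a0 : 0 < a by rewrite divr_gt0.
have ea : e = a * n.+1%:R by rewrite divfK.
rewrite -(ltr_pXn2r (n := 2)) ?nnegrE ?eucl_norm_ge0 ?ltW // eucl_norm_sqr.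
apply: (le_lt_trans (y := \sum_(i < n) a ^+ 2)).
  apply: ler_sum => i _; rewrite -real_normK ?num_real //.
  by rewrite lerXn2r ?nnegrE ?normr_ge0 ?(ltW a0) ?xe.
rewrite sumr_const card_ord ea -mulr_natr -natr1; nra.
Qed.

Lemma eucl_dist_transport (tau : R) (p q : 'rV[R]_n * 'rV[R]_n) : 0 <= tau ->
  eucl_dist (p.1 + tau *: p.2) (q.1 + tau *: q.2)
  <= eucl_dist p.1 q.1 + tau * eucl_dist p.2 q.2.
Proof.
move=> tau0; rewrite /eucl_dist.
have -> : p.1 + tau *: p.2 - (q.1 + tau *: q.2) = (p.1 - q.1) + tau *: (p.2 - q.2).
  by rewrite scalerBr opprD addrACA.
by rewrite -[X in _ + X * _](ger0_norm tau0) -eucl_normZ eucl_normD.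
Qed.

Lemma eucl_dist2_le (p q : 'rV[R]_n * 'rV[R]_n) :
  eucl_dist2 p q <= eucl_dist p.1 q.1 + eucl_dist p.2 q.2.
Proof.
rewrite /eucl_dist2 /eucl_dist.
have a0 := eucl_norm_ge0 (p.1 - q.1); have b0 := eucl_norm_ge0 (p.2 - q.2).
rewrite -[leRHS]ger0_norm ?addr_ge0 // -sqrtr_sqr ler_sqrt ?sqr_ge0 //; nra.
Qed.

End EuclideanNorm.

Section CoordinatewiseMeasurable.
Context {R : realType} {d : measure_display} {T : measurableType d} {n : nat}.
Implicit Types h : T -> 'rV[R]_n.

(* Maps into [Rd R n] are handled through their coordinates: their
   measurability cannot be read off from that of the coordinates unless the
   Borel sets of R^n are identified with the product sigma-algebra. *)
Definition coordwise_measurable h :=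
  forall i, measurable_fun setT (fun t => h t ord0 i).

Lemma coordwise_measurable_cst (q : 'rV[R]_n) : coordwise_measurable (fun=> q).
Proof. by move=> i; exact: measurable_cst. Qed.

Lemma coordwise_measurableB h1 h2 : coordwise_measurable h1 ->
  coordwise_measurable h2 -> coordwise_measurable (fun t => h1 t - h2 t).
Proof.
move=> m1 m2 i; under eq_fun do rewrite !mxE.
exact: measurable_funB.
Qed.

Lemma coordwise_measurableDZ (c : R) h1 h2 : coordwise_measurable h1 ->
  coordwise_measurable h2 -> coordwise_measurable (fun t => h1 t + c *: h2 t).
Proof.
move=> m1 m2 i; under eq_fun do rewrite !mxE.
exact: measurable_funD (measurable_funM (measurable_cst c) (m2 i)).
Qed.

Lemma measurable_eucl_norm h : coordwise_measurable h ->
  measurable_fun setT (fun t => eucl_norm (h t)).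
Proof.
move=> mh; rewrite /eucl_norm.
change (measurable_fun setT (Num.sqrt \o fun t => \sum_(i < n) h t ord0 i ^+ 2)).
apply: measurableT_comp.
  exact: continuous_measurable_fun (@sqrt_continuous R).
by apply: measurable_sum => i; exact: measurable_funX.
Qed.

Lemma measurable_eucl_dist_cst h (q : 'rV[R]_n) : coordwise_measurable h ->
  measurable_fun setT (fun t => eucl_dist (h t) q).
Proof.
by move=> mh; apply: measurable_eucl_norm; apply: coordwise_measurableB => //;
  exact: coordwise_measurable_cst.
Qed.

End CoordinatewiseMeasurable.

Lemma coord_measurable {R : realType} {n : nat} (i : 'I_n) :
  measurable_fun setT (fun x : Rd R n => (x : 'rV[R]_n) ord0 i).
Proof.
apply: (measurability _ (RGenOpens.measurableE R)).
move=> _ [_ [a [b ->]] <-]; rewrite setTI; apply: sub_sigma_algebra.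
by move: (@coord_continuous R 1 n ord0 i) => /continuousP; apply; exact: interval_open.
Qed.

Lemma measurable_coordwise {R : realType} {d} {T : measurableType d} {n : nat}
  {g : T -> Rd R n} : measurable_fun setT g ->
  coordwise_measurable (fun t => (g t : 'rV[R]_n)).
Proof. by move=> mg i; exact: measurableT_comp (coord_measurable i) mg. Qed.

Lemma measurable_eucl_dist {R : realType} {d} {T : measurableType d} {n : nat}
  {g1 g2 : T -> Rd R n} : measurable_fun setT g1 -> measurable_fun setT g2 ->
  measurable_fun setT (fun t => eucl_dist (g1 t : 'rV[R]_n) (g2 t)).
Proof.
move=> m1 m2; apply: measurable_eucl_norm.
by apply: coordwise_measurableB; exact: measurable_coordwise.
Qed.

Lemma lipschitz_measurable_comp {R : realType} {d} {T : measurableType d}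
    {X : Type} {I : countType} {dist : X -> X -> R} {psi : X -> R}
    (q : I -> X) {g : T -> X} :
  (forall a b, `|psi a - psi b| <= dist a b) ->
  (forall x e, 0 < e -> exists i, dist x (q i) < e) ->
  (forall i, measurable_fun setT (fun t => dist (g t) (q i))) ->
  measurable_fun setT (psi \o g).
Proof.
move=> psiL qdense mdist; apply/measurable_EFinP.
(* psi = inf_i (psi (q i) + dist (., q i)) over the countable dense family q. *)
pose f k t : \bar R :=
  if unpickle k is Some i then (psi (q i) + dist (g t) (q i))%:E else +oo%E.
have -> : EFin \o (psi \o g) = fun t => einfs (f ^~ t) 0.
  apply/funext => t /=; apply/eqP; rewrite eq_le; apply/andP; split.
    apply: le_ereal_inf_tmp => _ [k _ <-]; rewrite /f.
    case: unpickle => [i|]; last exact: leey.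
    by rewrite lee_fin; have := psiL (g t) (q i); rewrite ler_norml; lra.
  apply/lee_addgt0Pr => e e0.
  have [i qi] := qdense (g t) (e / 2) (divr_gt0 e0 (ltr0Sn _ 1)).
  rewrite /einfs; apply: (le_trans (ereal_inf_lbound _)); first by exists (pickle i).
  by rewrite /f pickleK lee_fin; have := psiL (g t) (q i); rewrite ler_norml; lra.
apply: measurable_fun_einfs => k; rewrite /f; case: unpickle => [i|];
  last exact: measurable_cst.
by apply/measurable_EFinP; exact: measurable_funD (measurable_cst _) (mdist i).
Qed.

Definition rat_row {R : realType} {n : nat} (r : 'rV[rat]_n) : 'rV[R]_n :=
  map_mx ratr r.

Lemma rat_row_dense {R : realType} {n : nat} (x : 'rV[R]_n) {e : R} : 0 < e ->
  exists r, eucl_dist x (rat_row r) < e.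
Proof.
move=> e0; set a := e / n.+1%:R.
have approx i : exists q : rat, `|x ord0 i - ratr q| <= a.
  have [|q] := @rat_in_itvoo R (x ord0 i - a) (x ord0 i + a).
    by rewrite ltrD2l gtrN // divr_gt0.
  (* [lra] does not accept [ratr q] as an atom. *)
  rewrite in_itv /= => /andP[lo hi]; exists q; move: (ratr q : R) lo hi => y lo hi.
  by rewrite ler_norml; apply/andP; split; lra.
exists (\row_i xchoose (approx i)); apply: eucl_norm_lt_coord => // i.
by rewrite !mxE; exact: xchooseP (approx i).
Qed.

Section BoundedLipschitzMeasurable.
Context {R : realType} {n : nat}.

Lemma BL1_measurable_comp {d} {T : measurableType d} {g : T -> 'rV[R]_n}
    {psi : 'rV[R]_n -> R} :
  coordwise_measurable g -> BL1 (@eucl_dist R n) psi -> measurable_fun setT (psi \o g).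
Proof.
move=> mg [_ psiL]; apply: (lipschitz_measurable_comp rat_row psiL).
  exact: rat_row_dense.
by move=> r; exact: measurable_eucl_dist_cst.
Qed.

Lemma BL1_measurable {psi : Rd R n -> R} :
  BL1 (@eucl_dist R n) psi -> measurable_fun setT psi.
Proof. exact: BL1_measurable_comp (measurable_coordwise (@measurable_id _ _ setT)). Qed.

Lemma BL1_dist2_measurable {psi : (Rd R n * Rd R n)%type -> R} :
  BL1 (@eucl_dist2 R n) psi -> measurable_fun setT psi.
Proof.
move=> [_ psiL]; change (measurable_fun setT (psi \o id)).
apply: (lipschitz_measurable_comp
  (fun r : 'rV[rat]_n * 'rV[rat]_n => (rat_row r.1, rat_row r.2)) psiL).
  move=> x e e0; have e2 : 0 < e / 2 by rewrite divr_gt0.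
  have [r1 h1] := rat_row_dense x.1 e2; have [r2 h2] := rat_row_dense x.2 e2.
  by exists (r1, r2); apply: le_lt_trans (eucl_dist2_le _ _) _ => /=; lra.
move=> r /=; rewrite /eucl_dist2.
change (measurable_fun setT (Num.sqrt \o fun t : (Rd R n * Rd R n)%type =>
  eucl_dist (t.1 : 'rV[R]_n) (rat_row r.1) ^+ 2 +
  eucl_dist (t.2 : 'rV[R]_n) (rat_row r.2) ^+ 2)).
apply: measurableT_comp; first exact: continuous_measurable_fun (@sqrt_continuous R).
apply: measurable_funD; apply: measurable_funX; apply: measurable_eucl_dist_cst;
  apply: measurable_coordwise; [exact: measurable_fst|exact: measurable_snd].
Qed.

End BoundedLipschitzMeasurable.

Section BoundedIntegrals.
Context {R : realType} {d : measure_display} {T : measurableType d}.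
Local Open Scope ereal_scope.
Variable f : T -> R.
Hypotheses (mf : measurable_fun setT f) (f_le1 : forall x, (`|f x| <= 1)%R).

Lemma bounded_integrable {m : {measure set T -> \bar R}} :
  m setT < +oo -> m.-integrable setT (EFin \o f).
Proof.
move=> mT; apply: measurable_bounded_integrable => //.
by exists 1%R; split => // M M1 x _; exact: le_trans (f_le1 x) (ltW M1).
Qed.

Lemma bounded_integral_fin_num {m : {measure set T -> \bar R}} :
  m setT < +oo -> \int[m]_x (f x)%:E \is a fin_num.
Proof. by move=> mT; exact/integrable_fin_num/bounded_integrable. Qed.

Lemma abse_bounded_integral_le {m : {measure set T -> \bar R}} :
  `|\int[m]_x (f x)%:E| <= m setT.
Proof.
apply: le_trans (le_abse_integral _ _ _) _ => //; first exact/measurable_EFinP.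
rewrite -[leRHS]mul1e -integral_cst //; apply: ge0_le_integral => //.
- by apply/measurable_EFinP; exact: measurableT_comp.
- by move=> x _; rewrite /= lee_fin.
Qed.

Lemma integral_affine {m : {measure set T -> \bar R}} (a s : R) : m setT < +oo ->
  \int[m]_x (a + s * f x)%:E = a%:E * m setT + s%:E * \int[m]_x (f x)%:E.
Proof.
move=> mT; have ia : m.-integrable setT (EFin \o cst a).
  apply: measurable_bounded_integrable => //.
  by exists `|a|%R; split => // M aM x _; exact: ltW.
under eq_integral do rewrite EFinD EFinM.
rewrite integralD //; last exact/integrableZl/bounded_integrable.
by rewrite integral_cst // integralZl //; exact: bounded_integrable.
Qed.

Lemma submeasure_integral_diff {m1 m2 : {measure set T -> \bar R}} :
  submeasure m1 m2 -> m2 setT < +oo ->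
  `|\int[m2]_x (f x)%:E - \int[m1]_x (f x)%:E| <= m2 setT - m1 setT.
Proof.
move=> m12 m2T; have m1T := le_lt_trans (m12 _ measurableT) m2T.
have mono s : `|s|%R = 1%R ->
    \int[m1]_x (1 + s * f x)%:E <= \int[m2]_x (1 + s * f x)%:E.
  move=> s1; apply: ge0_le_measure_integral => // [x|].
    have : (`|s * f x| <= 1)%R by rewrite normrM s1 mul1r.
    by rewrite lee_fin ler_norml => /andP[? _]; lra.
  apply/measurable_EFinP; apply: measurable_funD; first exact: measurable_cst.
  exact: measurable_funM (measurable_cst s) mf.
move: (mono 1%R (normr1 _)) (mono (-1)%R (normrN1 _)); rewrite !integral_affine //.
have /EFin_fin_numP[a1 ->] := bounded_integral_fin_num m1T.
have /EFin_fin_numP[a2 ->] := bounded_integral_fin_num m2T.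
have /EFin_fin_numP[M1 ->] : m1 setT \is a fin_num by rewrite ge0_fin_numE.
have /EFin_fin_numP[M2 ->] : m2 setT \is a fin_num by rewrite ge0_fin_numE.
by rewrite !mul1e -!EFinM -!EFinB -!EFinD /= !lee_fin ler_norml; lra.
Qed.

End BoundedIntegrals.

Section ImageMeasure.
Context {R : realType} {d1 d2 : measure_display}.
Context {X : measurableType d1} {Y : measurableType d2}.
Local Open Scope ereal_scope.
Context {p : {measure set X -> \bar R}} {m : {measure set Y -> \bar R}}.
Variable phi : X -> Y.
Hypotheses (mphi : measurable_fun setT phi)
  (p_phi : forall A, measurable A -> p (phi @^-1` A) = m A).

Lemma ge0_integral_image {f : Y -> \bar R} : measurable_fun setT f ->
  (forall y, 0 <= f y) -> \int[m]_y f y = \int[p]_x f (phi x).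
Proof.
move=> mf f0; rewrite (eq_measure_integral (pushforward p phi)).
  by rewrite ge0_integral_pushforward // preimage_setT.
by move=> A mA _; rewrite -p_phi.
Qed.

Lemma bounded_integral_image {f : Y -> R} : measurable_fun setT f ->
  (forall y, (`|f y| <= 1)%R) -> p setT < +oo ->
  \int[m]_y (f y)%:E = \int[p]_x (f (phi x))%:E.
Proof.
move=> mf f1 pT; rewrite (eq_measure_integral (pushforward p phi)).
  rewrite integral_pushforward ?preimage_setT //; first exact/measurable_EFinP.
  exact (bounded_integrable (f \o phi) (measurableT_comp mf mphi)
    (fun x => f1 (phi x)) pT).
by move=> A mA _; rewrite -p_phi.
Qed.

End ImageMeasure.

Lemma coupling_integral_diff_le {R : realType} {d} {X : measurableType d}
    {m1 m2 : {measure set X -> \bar R}} {p : {measure set (X * X) -> \bar R}}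
    {f : X -> R} {rho : X * X -> R} :
  (forall A, measurable A -> p (A `*` setT) = m1 A /\ p (setT `*` A) = m2 A) ->
  (p setT < +oo)%E -> measurable_fun setT f -> (forall x, `|f x| <= 1) ->
  measurable_fun setT rho -> (forall z, 0 <= rho z) ->
  (forall z, f z.1 - f z.2 <= rho z) ->
  (\int[m1]_x (f x)%:E - \int[m2]_x (f x)%:E <= \int[p]_z (rho z)%:E)%E.
Proof.
move=> marg pT mf f1 mrho rho0 f_rho.
rewrite (bounded_integral_image (p := p) fst measurable_fst) //; last first.
  by move=> A mA; rewrite -setXT; case: (marg A mA).
rewrite (bounded_integral_image (p := p) snd measurable_snd) //; last first.
  by move=> A mA; rewrite -setTX; case: (marg A mA).
have irho_ge0 : (0 <= \int[p]_z (rho z)%:E)%E.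
  by apply: integral_ge0 => z _; rewrite lee_fin.
have [rho_fin|] := boolP ((\int[p]_z (rho z)%:E)%E \is a fin_num); last first.
  by rewrite ge0_fin_numE // -leNgt leye_eq => /eqP ->; exact: leey.
have if1 := bounded_integrable (f \o fst) (measurableT_comp mf measurable_fst)
  (fun z => f1 z.1) pT.
have if2 := bounded_integrable (f \o snd) (measurableT_comp mf measurable_snd)
  (fun z => f1 z.2) pT.
rewrite -integralB //; apply: le_integral => //; first exact: integrableB.
  apply/integrableP; split; first exact/measurable_EFinP.
  by under eq_integral do rewrite gee0_abs ?lee_fin //; rewrite -(ge0_fin_numE irho_ge0).
by move=> z _; rewrite -EFinB lee_fin.
Qed.

Lemma TVnorm_ge_mass {R : realType} {d} {T : measurableType d}
    (m1 m2 : set T -> \bar R) :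
  (`|m1 setT - m2 setT| <= TVnorm m1 m2)%E.
Proof.
apply: ereal_sup_ubound; exists 1%N, (fun=> setT); split => //.
- by move=> i j; rewrite (ord1 i) (ord1 j) eqxx.
- by rewrite big_ord1.
Qed.

Lemma proj1m_setT {R : realType} {n : nat} (V : set (Rd R n * Rd R n) -> \bar R) :
  proj1m V setT = V setT.
Proof. by rewrite /proj1m setXTT. Qed.

Section BoundedLipschitzDual.
Context {R : realType} {n : nat}.
Local Open Scope ereal_scope.

Lemma BLdual_fst_marginals {mu nu : {measure set (Rd R n) -> \bar R}}
    {Vm Vn : {measure set (Rd R n * Rd R n)%type -> \bar R}} :
  (forall A, measurable A -> Vm (A `*` setT) = mu A) ->
  (forall A, measurable A -> Vn (A `*` setT) = nu A) ->
  Vm setT < +oo -> Vn setT < +oo ->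
  BLdual_fst Vm Vn = BLdual mu nu.
Proof.
move=> Vm_mu Vn_nu VmT VnT.
have E f : BL1 (@eucl_dist R n) f ->
    \int[Vm]_z ((f \o fst) z)%:E - \int[Vn]_z ((f \o fst) z)%:E =
    \int[mu]_x (f x)%:E - \int[nu]_x (f x)%:E.
  move=> fBL; have mf := BL1_measurable fBL; have f1 := fBL.1.
  rewrite (bounded_integral_image (p := Vm) fst measurable_fst _ mf f1 VmT); last first.
    by move=> A mA; rewrite -setXT Vm_mu.
  rewrite (bounded_integral_image (p := Vn) fst measurable_fst _ mf f1 VnT) //.
  by move=> A mA; rewrite -setXT Vn_nu.
rewrite /BLdual_fst /BLdual /ipm; congr ereal_sup; apply/seteqP; split.
  by move=> _ [_ [f fBL <-] <-]; exists f => //; rewrite E.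
by move=> _ [f fBL <-]; exists (f \o fst); [exists f | rewrite E].
Qed.

Lemma BLdual_fin_num {mu nu : {measure set (Rd R n) -> \bar R}} :
  mu setT < +oo -> nu setT < +oo -> BLdual mu nu \is a fin_num.
Proof.
move=> muT nuT; rewrite fin_numElt; apply/andP; split.
  apply: (@lt_le_trans _ _ 0); first exact: ltNy0.
  apply: ereal_sup_ubound; exists (fun=> 0%R); last by rewrite !integral0 subee.
  by split => [x|x y]; rewrite ?subrr normr0 // eucl_norm_ge0.
apply: (@le_lt_trans _ _ (mu setT + nu setT)); last exact: lte_add_pinfty.
apply: ge_ereal_sup => _ [f fBL <-].
have mf := BL1_measurable fBL; have f1 := fBL.1.
apply: le_trans (lee_abs _) _; apply: le_trans (lee_abs_sub _ _) _.
by apply: leeD; exact: abse_bounded_integral_le.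
Qed.

End BoundedLipschitzDual.

Section TestFunctionEstimate.
Context {R : realType} {n : nat}.
Local Open Scope ereal_scope.
Local Notation Rd2 := (Rd R n * Rd R n)%type.
Variables (Phi : Rd2 -> R) (c : R).
Hypotheses (mPhi : measurable_fun setT Phi) (Phi_le1 : forall z, (`|Phi z| <= 1)%R)
  (c_ge0 : (0 <= c)%R)
  (Phi_lip : forall z1 z2 : Rd2,
     (Phi z1 - Phi z2 <= eucl_dist (z1.1 : 'rV[R]_n) z2.1
                          + c * eucl_dist (z1.2 : 'rV[R]_n) z2.2)%R).

Let integral_Phi (V : {measure set Rd2 -> \bar R}) :=
  \int[V]_z (Phi z)%:E.

Lemma integral_Phi_submeasure {V Vt : {measure set Rd2 -> \bar R}} :
  submeasure Vt V -> V setT < +oo ->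
  `|integral_Phi V - integral_Phi Vt| <= TVnorm (proj1m V) (proj1m Vt).
Proof.
move=> VtV VT; apply: le_trans (submeasure_integral_diff _ mPhi Phi_le1 VtV VT) _.
rewrite -(proj1m_setT V) -(proj1m_setT Vt).
exact: le_trans (lee_abs _) (TVnorm_ge_mass _ _).
Qed.

Lemma integral_Phi_plan {Vt1 Vt2 : {measure set Rd2 -> \bar R}}
    {p : {measure set (Rd2 * Rd2)%type -> \bar R}}
    {gamma : {measure set Rd2 -> \bar R}} :
  (forall A, measurable A -> p (A `*` setT) = Vt1 A /\ p (setT `*` A) = Vt2 A) ->
  p setT < +oo ->
  (forall A, measurable A -> gamma A = p [set z | A (z.1.1, z.2.1)]) ->
  \int[gamma]_xy (eucl_dist (xy.1 : 'rV[R]_n) xy.2)%:E = W1 (proj1m Vt1) (proj1m Vt2) ->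
  integral_Phi Vt1 - integral_Phi Vt2 <=
    W1 (proj1m Vt1) (proj1m Vt2)
    + c%:E * \int[p]_z (eucl_dist (z.1.2 : 'rV[R]_n) z.2.2)%:E.
Proof.
move=> marg pT gamma_p gamma_opt.
have m11 : measurable_fun setT (fun z : Rd2 * Rd2 => z.1.1).
  exact: measurableT_comp measurable_fst measurable_fst.
have m21 : measurable_fun setT (fun z : Rd2 * Rd2 => z.2.1).
  exact: measurableT_comp measurable_fst measurable_snd.
have m12 : measurable_fun setT (fun z : Rd2 * Rd2 => z.1.2).
  exact: measurableT_comp measurable_snd measurable_fst.
have m22 : measurable_fun setT (fun z : Rd2 * Rd2 => z.2.2).
  exact: measurableT_comp measurable_snd measurable_snd.
have W1_p : W1 (proj1m Vt1) (proj1m Vt2) =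
    \int[p]_z (eucl_dist (z.1.1 : 'rV[R]_n) z.2.1)%:E.
  rewrite -gamma_opt (ge0_integral_image (p := p) (fun z => (z.1.1, z.2.1))) //.
  - exact: measurable_fun_pair.
  - by move=> A mA; rewrite gamma_p.
  - by apply/measurable_EFinP; exact: measurable_eucl_dist.
  - by move=> xy; rewrite lee_fin eucl_norm_ge0.
pose rho z :=
  (eucl_dist (z.1.1 : 'rV[R]_n) z.2.1 + c * eucl_dist (z.1.2 : 'rV[R]_n) z.2.2)%R.
have md13 := measurable_eucl_dist m11 m21; have md24 := measurable_eucl_dist m12 m22.
have mcd24 := measurable_funM (measurable_cst c) md24.
have rho_ge0 z : (0 <= rho z)%R by rewrite addr_ge0 ?mulr_ge0 ?eucl_norm_ge0.
have rho_split : \int[p]_z (rho z)%:E =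
    W1 (proj1m Vt1) (proj1m Vt2)
    + c%:E * \int[p]_z (eucl_dist (z.1.2 : 'rV[R]_n) z.2.2)%:E.
  rewrite W1_p /rho; under eq_integral do rewrite EFinD.
  rewrite ge0_integralD //; last 4 first.
  - by move=> z _; rewrite lee_fin eucl_norm_ge0.
  - exact/measurable_EFinP.
  - by move=> z _; rewrite lee_fin mulr_ge0 ?eucl_norm_ge0.
  - exact/measurable_EFinP.
  under [X in _ + X = _]eq_integral do rewrite EFinM.
  rewrite ge0_integralZl //; first exact/measurable_EFinP.
  by move=> z _; rewrite lee_fin eucl_norm_ge0.
by rewrite -rho_split; apply: coupling_integral_diff_le => //; exact: measurable_funD.
Qed.

Lemma integral_Phi_diff_le_cost
    {Vm Vn Vt1 Vt2 : {measure set Rd2 -> \bar R}}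
    {p : {measure set (Rd2 * Rd2)%type -> \bar R}}
    {gamma : {measure set Rd2 -> \bar R}} :
  Vm setT < +oo -> Vn setT < +oo -> submeasure Vt1 Vm -> submeasure Vt2 Vn ->
  (forall A, measurable A -> p (A `*` setT) = Vt1 A /\ p (setT `*` A) = Vt2 A) ->
  BLdual_fst Vm Vn = TVnorm (proj1m Vm) (proj1m Vt1) + TVnorm (proj1m Vn) (proj1m Vt2)
                     + W1 (proj1m Vt1) (proj1m Vt2) ->
  (forall A, measurable A -> gamma A = p [set z | A (z.1.1, z.2.1)]) ->
  Popt (proj1m Vt1) (proj1m Vt2) gamma ->
  integral_Phi Vm - integral_Phi Vn <=
    BLdual_fst Vm Vn + c%:E * \int[p]_z (eucl_dist (z.1.2 : 'rV[R]_n) z.2.2)%:E.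
Proof.
move=> VmT VnT sub1 sub2 marg BL_split gamma_p [_ gamma_opt].
have Vt1T := le_lt_trans (sub1 _ measurableT) VmT.
have Vt2T := le_lt_trans (sub2 _ measurableT) VnT.
have pT : p setT < +oo by rewrite -setXTT; case: (marg setT measurableT) => ->.
have /EFin_fin_numP[a Ea] := bounded_integral_fin_num Phi mPhi Phi_le1 VmT.
have /EFin_fin_numP[b Eb] := bounded_integral_fin_num Phi mPhi Phi_le1 VnT.
have /EFin_fin_numP[a1 Ea1] := bounded_integral_fin_num Phi mPhi Phi_le1 Vt1T.
have /EFin_fin_numP[b1 Eb1] := bounded_integral_fin_num Phi mPhi Phi_le1 Vt2T.
have mass1 := integral_Phi_submeasure sub1 VmT.
have mass2 := integral_Phi_submeasure sub2 VnT.
have plan := integral_Phi_plan marg pT gamma_p gamma_opt.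
rewrite /integral_Phi Ea Ea1 -EFinB abse_EFin in mass1.
rewrite /integral_Phi Eb Eb1 -EFinB abse_EFin distrC in mass2.
rewrite /integral_Phi Ea1 Eb1 -EFinB in plan.
rewrite /integral_Phi Ea Eb -EFinB BL_split.
have -> : (a - b = (a - a1) + (b1 - b) + (a1 - b1))%R by ring.
rewrite !EFinD -[leRHS]addeA; apply: leeD => //; apply: leeD.
  by apply: le_trans mass1; rewrite lee_fin ler_norm.
by apply: le_trans mass2; rewrite lee_fin ler_norm.
Qed.

Lemma integral_Phi_diff_le (mu nu : {finite_measure set (Rd R n) -> \bar R})
    (Vm Vn : {finite_measure set Rd2 -> \bar R}) (CF : R) :
  (forall A, measurable A -> Vm (A `*` setT) = mu A) ->
  (forall A, measurable A -> Vn (A `*` setT) = nu A) ->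
  Wg Vm Vn <= CF%:E * BLdual mu nu ->
  integral_Phi Vm - integral_Phi Vn <= (1 + c * CF)%:E * BLdual mu nu.
Proof.
move=> Vm_mu Vn_nu WgF.
have mass_lty d (T : measurableType d) (m : {finite_measure set T -> \bar R}) :
  m setT < +oo by exact: fin_num_fun_lty (fin_num_measure m).
have BL := BLdual_fst_marginals Vm_mu Vn_nu (mass_lty _ _ Vm) (mass_lty _ _ Vn).
have /EFin_fin_numP[b Eb] := BLdual_fin_num (mass_lty _ _ mu) (mass_lty _ _ nu).
rewrite Eb in BL WgF *; apply/lee_addgt0Pr => e e0.
have ec : (0 < e / (c + 1))%R by rewrite divr_gt0 // ltr_wpDl.
have : Wg Vm Vn < (CF * b + e / (c + 1))%:E.
  by apply: le_lt_trans WgF _; rewrite -EFinM lte_fin ltrDl.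
move=> /ereal_inf_lt[_ [Vt1 [Vt2 [p [[sub1 sub2] marg BL_split
  [gamma [gamma_p gamma_opt]] ->]]]] cost_lt].
apply: le_trans (integral_Phi_diff_le_cost (mass_lty _ _ Vm) (mass_lty _ _ Vn)
  sub1 sub2 marg BL_split gamma_p gamma_opt) _.
rewrite BL; apply: le_trans (leeD2l _ (lee_wpmul2l _ (ltW cost_lt))) _.
  by rewrite lee_fin.
have ce : (c * (e / (c + 1)) <= e)%R by rewrite mulrA ler_pdivrMr ?ltr_wpDl //; nra.
by rewrite -EFinM -!EFinD lee_fin; nra.
Qed.

End TestFunctionEstimate.

Section Transport.
Context {R : realType} {n : nat}.

Lemma transport_coordwise_measurable (tau : R) :
  coordwise_measurable (transport (n := n) tau).
Proof.
by apply: coordwise_measurableDZ; apply: measurable_coordwise;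
  [exact: measurable_fst | exact: measurable_snd].
Qed.

Lemma BL1_transport_lip {tau : R} {psi : Rd R n -> R} :
  0 <= tau -> BL1 (@eucl_dist R n) psi -> forall z1 z2 : (Rd R n * Rd R n)%type,
  psi (transport tau z1) - psi (transport tau z2)
  <= eucl_dist (z1.1 : 'rV[R]_n) z2.1 + tau * eucl_dist (z1.2 : 'rV[R]_n) z2.2.
Proof.
move=> tau0 [_ psiL] z1 z2; apply: le_trans (ler_norm _) _.
by apply: le_trans (psiL _ _) _; exact: eucl_dist_transport.
Qed.

Lemma BL1_dist2_lip {psi : (Rd R n * Rd R n)%type -> R} :
  BL1 (@eucl_dist2 R n) psi -> forall z1 z2 : (Rd R n * Rd R n)%type,
  psi z1 - psi z2
  <= eucl_dist (z1.1 : 'rV[R]_n) z2.1 + 1 * eucl_dist (z1.2 : 'rV[R]_n) z2.2.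
Proof.
move=> [_ psiL] z1 z2; rewrite mul1r; apply: le_trans (ler_norm _) _.
by apply: le_trans (psiL _ _) _; exact: eucl_dist2_le.
Qed.

End Transport.

Theorem lemmaA3 (R : realType) (n : nat)
  (V : {finite_measure set (Rd R n) -> \bar R} ->
       {finite_measure set ((Rd R n * Rd R n)%type) -> \bar R})
  (HV1 : forall mu A, measurable A -> V mu (A `*` setT) = mu A)
  (HF : forall r : R, 0 < r -> exists CF : R, forall mu nu : {finite_measure set (Rd R n) -> \bar R},
     supported_in mu r -> supported_in nu r ->
     (Wg (V mu) (V nu) <= CF%:E * BLdual mu nu)%E) :
  (* (V2) *)
  (forall r : R, 0 < r -> exists C : R, forall mu nu : {finite_measure set (Rd R n) -> \bar R},
     supported_in mu r -> supported_in nu r ->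
     (BLdual2 (V mu) (V nu) <= C%:E * BLdual mu nu)%E) /\
  (* (V3) *)
  (forall r : R, 0 < r -> exists CH : R, forall mu nu : {finite_measure set (Rd R n) -> \bar R},
     supported_in mu r -> supported_in nu r ->
     forall tau : R, 0 < tau ->
     (ipm [set (psi \o transport tau)
           | psi in [set psi : Rd R n -> R | BL1 (@eucl_dist R n) psi]]
          (V mu) (V nu)
      <= (1 + CH * tau)%:E * BLdual mu nu)%E).
Proof.
split=> r r0; have [CF HCF] := HF r r0.
- exists (1 + CF) => mu nu smu snu; apply: ge_ereal_sup => _ [psi psiBL <-].
  rewrite -[in 1 + CF](mul1r CF).
  exact: (integral_Phi_diff_le _ _ (BL1_dist2_measurable psiBL) psiBL.1 ler01
    (BL1_dist2_lip psiBL) _ _ _ _ _ (HV1 mu) (HV1 nu) (HCF mu nu smu snu)).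
- exists CF => mu nu smu snu tau tau0.
  apply: ge_ereal_sup => _ [_ [psi psiBL <-] <-]; rewrite mulrC.
  exact: (integral_Phi_diff_le _ _
    (BL1_measurable_comp (transport_coordwise_measurable tau) psiBL)
    (fun z => psiBL.1 _) (ltW tau0) (BL1_transport_lip (ltW tau0) psiBL)
    _ _ _ _ _ (HV1 mu) (HV1 nu) (HCF mu nu smu snu)).
Qed.
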